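(* For the system $$u_{0,0}-v_{1,1}=0,\qquad (u_{1,0}-u_{0,0})(v_{1,0}-u_{0,0})-(u_{0,1}-u_{0,0})(v_{0,1}-u_{0,0})=0,$$ the following pairs are conservation laws, i.e. satisfy $(\mathcal T-1)\rho=(\mathcal S-1)\sigma$ on solutions: $$(\rho_1,\sigma_1)=\Big(\ln\Big|\frac{v_{0,0}-u_{-1,0}}{(v_{1,0}-u_{-1,0})^2}\Big|,\ \ \ln\Big|\frac{(u_{-2,0}-v_{0,0})^2}{u_{-2,0}-u_{-1,0}}\Big|\Big),$$ $$(\varrho,\varsigma)=\big(\ln|v_{1,0}-u_{0,0}|,\ \ \ln|v_{0,1}-u_{0,0}|\big).$$
   Context: Unknowns $u,v$ on $\mathbb Z^2$, $u_{i,j}=u(n+i,m+j)$, similarly $v$. Shifts $\mathcal S:n\mapsto n+1$, $\mathcal T:m\mapsto m+1$, acting by $\mathcal S^k\mathcal T^\ell(f_{i,j})=f_{i+k,j+\ell}$. A conservation law is a pair $(\rho,\sigma)$ of functions of finitely many shifts of $(u,v)$ such that $(\mathcal T-1)\rho=(\mathcal S-1)\sigma$ holds for all solutions of the system (on which all arguments of logarithms and denominators are nonzero). *)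

From Stdlib Require Import Reals ZArith.
Open Scope R_scope.

(* A lattice field: f n m = f(n,m). Shifted value f_{i,j} at (n,m). *)
Definition field := Z -> Z -> R.
Definition sh (f : field) (i j : Z) : field := fun n m => f (n + i)%Z (m + j)%Z.

Definition is_solution (u v : field) : Prop :=
  forall n m : Z,
    u n m - sh v 1 1 n m = 0 /\
    (sh u 1 0 n m - u n m) * (sh v 1 0 n m - u n m)
    - (sh u 0 1 n m - u n m) * (sh v 0 1 n m - u n m) = 0.

Definition conservation_identity (rho sigma : field) : Prop :=
  forall n m : Z, rho n (m + 1)%Z - rho n m = sigma (n + 1)%Z m - sigma n m.

Definition rho1 (u v : field) : field := fun n m =>
  ln (Rabs ((v n m - sh u (-1) 0 n m) / (sh v 1 0 n m - sh u (-1) 0 n m) ^ 2)).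
Definition sigma1 (u v : field) : field := fun n m =>
  ln (Rabs ((sh u (-2) 0 n m - v n m) ^ 2 / (sh u (-2) 0 n m - sh u (-1) 0 n m))).

Definition nondeg1 (u v : field) : Prop :=
  forall n m : Z,
    v n m - sh u (-1) 0 n m <> 0 /\
    sh v 1 0 n m - sh u (-1) 0 n m <> 0 /\
    sh u (-2) 0 n m - v n m <> 0 /\
    sh u (-2) 0 n m - sh u (-1) 0 n m <> 0.

Definition rho2 (u v : field) : field := fun n m =>
  ln (Rabs (sh v 1 0 n m - u n m)).
Definition sigma2 (u v : field) : field := fun n m =>
  ln (Rabs (sh v 0 1 n m - u n m)).

Definition nondeg2 (u v : field) : Prop :=
  forall n m : Z,
    sh v 1 0 n m - u n m <> 0 /\ sh v 0 1 n m - u n m <> 0.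

(* Both identities come from the multiplicativity of [ln |.|]: each one is
   equivalent to a cross-multiplication identity [X T = Z Y] among the
   arguments of the four logarithms.  For the second pair this is the quad
   equation itself, after [v_{1,1} = u_{0,0}].  For the first pair the terms in
   [v_{1,0}] cancel, and with [a, b, c, p, w] standing for
   [u_{-1,0}, u_{0,0}, u_{-1,1}, u_{-2,0}, v_{0,0}] the quad equation at
   [(n-1,m)] reads [(b-a)(w-a) = (c-a)(p-a)], from which
   [(b-c)(p-a) = (b-a)(p-w)] follows; these two relations give the cross
   identity. *)

From Stdlib Require Import Reals ZArith Lra.
Open Scope R_scope.

Lemma Rdiv_neq_0 (x y : R) : x <> 0 -> y <> 0 -> x / y <> 0.
Proof.
  intros Hx Hy; apply Rmult_integral_contrapositive_currified; [exact Hx |].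
  exact (Rinv_neq_0_compat y Hy).
Qed.

Lemma ln_Rabs_sub_cross (x y z t : R) :
  x <> 0 -> y <> 0 -> z <> 0 -> t <> 0 -> x * t = z * y ->
  ln (Rabs x) - ln (Rabs y) = ln (Rabs z) - ln (Rabs t).
Proof.
  intros Hx Hy Hz Ht Hcross.
  assert (Hsum : ln (Rabs x) + ln (Rabs t) = ln (Rabs z) + ln (Rabs y)).
  { rewrite <- !ln_mult by (apply Rabs_pos_lt; assumption).
    now rewrite <- !Rabs_mult, Hcross. }
  lra.
Qed.

Lemma first_law_cross (a b c p w z : R) :
  (b - a) * (w - a) = (c - a) * (p - a) ->
  p - a <> 0 -> a - b <> 0 -> b - c <> 0 -> z - a <> 0 ->
  (a - c) / (b - c) ^ 2 * ((p - w) ^ 2 / (p - a))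
  = (a - z) ^ 2 / (a - b) * ((w - a) / (z - a) ^ 2).
Proof.
  intros Hquad Hpa Hab Hbc Hza.
  assert (Hca : a - c = (b - a) * (w - a) / (a - p)).
  { field_simplify_eq; [lra | intro; apply Hpa; lra]. }
  assert (Hpw : p - w = (b - c) * (p - a) / (b - a)).
  { field_simplify_eq; [nra | intro; apply Hab; lra]. }
  rewrite Hca, Hpw.
  field; repeat split; try assumption; intro; [apply Hpa | apply Hab]; lra.
Qed.

Ltac normalize_Z_indices :=
  rewrite ?Z.add_0_r in *;
  repeat match goal with
  | |- context [(?i + ?j)%Z] => progress ring_simplify (i + j)%Z
  end;
  repeat match goal with
  | H : context [(?i + ?j)%Z] |- _ => progress ring_simplify (i + j)%Z in H
  end.

Section Solutions.

Variables u v : field.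
Hypothesis Hsol : is_solution u v.

Lemma solution_diag (n m : Z) : v (n + 1)%Z (m + 1)%Z = u n m.
Proof. destruct (Hsol n m) as [Hdiag _]; unfold sh in Hdiag; lra. Qed.

Lemma solution_quad (n m : Z) :
  (u (n + 1)%Z m - u n m) * (v (n + 1)%Z m - u n m)
  = (u n (m + 1)%Z - u n m) * (v n (m + 1)%Z - u n m).
Proof.
  destruct (Hsol n m) as [_ Hquad]; unfold sh in Hquad.
  rewrite !Z.add_0_r in Hquad; lra.
Qed.

Lemma first_conservation_law :
  nondeg1 u v -> conservation_identity (rho1 u v) (sigma1 u v).
Proof.
  intros Hnd n m; unfold rho1, sigma1, sh.
  pose proof (solution_diag n m) as Hd0.
  pose proof (solution_diag (n - 1) m) as Hd1.
  pose proof (solution_diag (n - 2) m) as Hd2.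
  pose proof (solution_quad (n - 1) m) as Hquad.
  destruct (Hnd n m) as (Hwa & Hza & Hpw & Hpa).
  destruct (Hnd n (m + 1)%Z) as (Hac & Hbc & _ & _).
  destruct (Hnd (n + 1)%Z m) as (_ & _ & Haz & Hab).
  unfold sh in *; normalize_Z_indices.
  rewrite Hd0, Hd1 in *; rewrite Hd2 in Hquad.
  apply ln_Rabs_sub_cross;
    try (apply Rdiv_neq_0; try apply pow_nonzero; assumption).
  apply first_law_cross; assumption.
Qed.

Lemma second_conservation_law :
  nondeg2 u v -> conservation_identity (rho2 u v) (sigma2 u v).
Proof.
  intros Hnd n m; unfold rho2, sigma2, sh.
  pose proof (solution_diag n m) as Hd0.
  pose proof (solution_quad n m) as Hquad.
  destruct (Hnd n m) as (Hv10 & Hv01).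
  destruct (Hnd n (m + 1)%Z) as (Hu01 & _).
  destruct (Hnd (n + 1)%Z m) as (_ & Hu10).
  unfold sh in *; normalize_Z_indices.
  rewrite Hd0 in *.
  apply ln_Rabs_sub_cross; try assumption.
  lra.
Qed.

End Solutions.

Theorem mainTheorem12 :
  (forall u v : field, is_solution u v -> nondeg1 u v ->
     conservation_identity (rho1 u v) (sigma1 u v)) /\
  (forall u v : field, is_solution u v -> nondeg2 u v ->
     conservation_identity (rho2 u v) (sigma2 u v)).
Proof.
  split; intros u v Hsol.
  - exact (first_conservation_law u v Hsol).
  - exact (second_conservation_law u v Hsol).
Qed.
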